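(* Let $t\ge1$, $w\in\mathbb{R}^t_{++}$, $\rho>0$, and let $\partial_{\rm HS}\mathrm{Prox}_{\rho\|w\circ\cdot\|_1^2}:\mathbb{R}^t\rightrightarrows\mathbb{R}^{t\times t}$ be the multifunction defined in the context. Then $\partial_{\rm HS}\mathrm{Prox}_{\rho\|w\circ\cdot\|_1^2}$ is a nonempty, compact valued and upper-semicontinuous multifunction; for every $a\in\mathbb{R}^t$ all elements of $\partial_{\rm HS}\mathrm{Prox}_{\rho\|w\circ\cdot\|_1^2}(a)$ are symmetric and positive semidefinite; and $\mathrm{Prox}_{\rho\|w\circ\cdot\|_1^2}(\cdot)$ is strongly semismooth with respect to $\partial_{\rm HS}\mathrm{Prox}_{\rho\|w\circ\cdot\|_1^2}(\cdot)$.
   Context: $\mathrm{Prox}_{\rho\|w\circ\cdot\|_1^2}(a):=\arg\min_z\{\frac12\|z-a\|^2+\rho\|w\circ z\|_1^2\}$, $\circ$ the Hadamard product. Let $Q:=I_t+2\rho ww^T$. For $a\in\mathbb{R}^t$ let $x(a):=\arg\min_{x\in\mathbb{R}^t}\{\frac12\langle x,Qx\rangle-\langle x,a\rangle\mid x\ge0\}$ and let $\mu(a)$ be the (unique) multiplier with $Qx(a)-a+\mu(a)=0$, $\mu(a)\circ x(a)=0$, $\mu(a)\le0$. Let $I(a):=\{i\mid x(a)_i=0\}$, $\mathcal{K}(a):=\{K\subseteq\{1,\dots,t\}\mid \mathrm{supp}(\mu(a))\subseteq K\subseteq I(a)\}$, where $\mathrm{supp}(\mu)=\{i:\mu_i\ne0\}$,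 and let $I_K$ be the matrix of rows of $I_t$ indexed by $K$. Define $\widehat\partial_{\rm HS}x(a)$ to be: $\{Q^{-1}\}$ if $Q^{-1}a>0$ (entrywise); $\{Q^{-1}-Q^{-1}I_K^T(I_KQ^{-1}I_K^T)^{-1}I_KQ^{-1}\mid K\in\mathcal{K}(a)\}$ if $(Q^{-1}a)_i<0$ for some $i$; and $\{Q^{-1}\}\cup\{Q^{-1}-Q^{-1}I_K^T(I_KQ^{-1}I_K^T)^{-1}I_KQ^{-1}\mid K\in\mathcal{K}(a)\}$ otherwise. Let $\mathrm{SGN}(z):=\{u\in\mathbb{R}^t: u_j=\mathrm{sign}(z_j)\text{ if }z_j\ne0,\ u_j\in[-1,1]\text{ if }z_j=0\}$. Then $\partial_{\rm HS}\mathrm{Prox}_{\rho\|w\circ\cdot\|_1^2}(a):=\{\mathrm{Diag}(\theta)P\,\mathrm{Diag}(\theta)\mid\theta\in\mathrm{SGN}(a),\ P\in\widehat\partial_{\rm HS}x(|a|)\}$. A locally Lipschitz $F$ is strongly semismooth at $a$ with respect to a multifunction $\mathcal{J}$ if $F$ is directionally differentiable at $a$ and $\|F(a')-F(a)-M(a'-a)\|=O(\|a'-a\|^2)$ as $a'\to a$, uniformly over $M\in\mathcal{J}(a')$; strongly semismooth means at every point. *)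

From HB Require Import structures.
From mathcomp Require Import all_boot all_order all_algebra.
From mathcomp Require Import all_classical all_reals all_analysis.
Set Implicit Arguments. Unset Strict Implicit. Unset Printing Implicit Defensive.
Import Order.TTheory GRing.Theory Num.Theory.
Import numFieldNormedType.Exports.
Local Open Scope classical_set_scope.
Local Open Scope ring_scope.

Section ProxDefs.
Variables (R : realType) (t : nat).
Implicit Types (a z x v w : 'cV[R]_t) (rho : R).

Definition sqnorm v : R := \sum_(i < t) v i 0 ^+ 2.
Definition inner x v : R := \sum_(i < t) x i 0 * v i 0.

Definition prox_obj rho w a z : R :=
  2^-1 * sqnorm (z - a) + rho * (\sum_(i < t) `|w i 0 * z i 0|) ^+ 2.

(* Prox_{rho ||w o .||_1^2}(a) := argmin_z prox_obj (the minimizer is unique) *)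
Definition Prox rho w a : 'cV[R]_t :=
  xget 0 [set z | forall z', prox_obj rho w a z <= prox_obj rho w a z'].

Definition Qmat rho w : 'M[R]_t := 1%:M + (2 * rho) *: (w *m w^T).
Definition Qinv rho w : 'M[R]_t := invmx (Qmat rho w).

Definition qp_obj rho w a x : R := 2^-1 * inner x (Qmat rho w *m x) - inner x a.
Definition nonneg_vec x : Prop := forall i, 0 <= x i 0.
Definition xsol rho w a : 'cV[R]_t :=
  xget 0 [set x | nonneg_vec x /\
                  forall x', nonneg_vec x' -> qp_obj rho w a x <= qp_obj rho w a x'].

(* the multiplier mu(a), uniquely determined by Q x(a) - a + mu(a) = 0 *)
Definition mult rho w a : 'cV[R]_t := a - Qmat rho w *m xsol rho w a.

Definition Iset rho w a : {set 'I_t} := [set i | xsol rho w a i 0 == 0].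
Definition suppmu rho w a : {set 'I_t} := [set i | mult rho w a i 0 != 0].
Definition Kfam rho w a (K : {set 'I_t}) : Prop :=
  suppmu rho w a \subset K /\ K \subset Iset rho w a.

(* I_K : the rows of I_t indexed by K (in increasing order) *)
Definition IK (K : {set 'I_t}) : 'M[R]_(#|K|, t) :=
  \matrix_(k < #|K|, j < t) (enum_val k == j)%:R.

Definition PK rho w (K : {set 'I_t}) : 'M[R]_t :=
  Qinv rho w - Qinv rho w *m (IK K)^T
               *m invmx (IK K *m Qinv rho w *m (IK K)^T) *m IK K *m Qinv rho w.

Definition hatJ rho w a (P : 'M[R]_t) : Prop :=
  let b := Qinv rho w *m a in
  if `[< forall i, 0 < b i 0 >] then P = Qinv rho w
  else if `[< exists i, b i 0 < 0 >] then exists2 K, Kfam rho w a K & P = PK rho w K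
  else P = Qinv rho w \/ exists2 K, Kfam rho w a K & P = PK rho w K.

Definition SGN z (u : 'cV[R]_t) : Prop :=
  forall j, (z j 0 != 0 -> u j 0 = Num.sg (z j 0)) /\
            (z j 0 = 0 -> -1 <= u j 0 <= 1).

Definition absv a : 'cV[R]_t := \col_i `|a i 0|.
Definition Diagv (u : 'cV[R]_t) : 'M[R]_t := diag_mx u^T.

Definition dHSProx rho w a (M : 'M[R]_t) : Prop :=
  exists theta P, [/\ SGN a theta, hatJ rho w (absv a) P &
                      M = Diagv theta *m P *m Diagv theta].

End ProxDefs.

Definition upper_semicontinuous_mf (R : realType) (t : nat)
  (J : 'cV[R]_t -> 'M[R]_t -> Prop) : Prop :=
  forall a (U : set 'M[R]_t), open U -> (J a : set _) `<=` U ->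
    \forall a' \near a, (J a' : set _) `<=` U.

Definition locally_lipschitz (R : realType) (t : nat) (F : 'cV[R]_t -> 'cV[R]_t) : Prop :=
  forall a : 'cV[R]_t, exists L : R, exists2 r : R, 0 < r &
    forall x y : 'cV[R]_t, `|x - a| < r -> `|y - a| < r ->
      `|F x - F y| <= L * `|x - y|.

Definition dir_differentiable (R : realType) (t : nat) (F : 'cV[R]_t -> 'cV[R]_t)
  (a : 'cV[R]_t) : Prop :=
  forall d : 'cV[R]_t, exists l : 'cV[R]_t,
    (fun tau : R => tau^-1 *: (F (a + tau *: d) - F a)) @ (0 : R)^'+ --> l.

Definition strongly_semismooth_at (R : realType) (t : nat) (F : 'cV[R]_t -> 'cV[R]_t)
  (J : 'cV[R]_t -> 'M[R]_t -> Prop) (a : 'cV[R]_t) : Prop :=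
  dir_differentiable F a /\
  exists2 C : R, 0 < C &
    \forall a' \near a, forall M, J a' M ->
      `|F a' - F a - M *m (a' - a)| <= C * `|a' - a| ^+ 2.

Definition strongly_semismooth (R : realType) (t : nat) (F : 'cV[R]_t -> 'cV[R]_t)
  (J : 'cV[R]_t -> 'M[R]_t -> Prop) : Prop :=
  locally_lipschitz F /\ forall a, strongly_semismooth_at F J a.

(** Let [x(y)] be the solution of the nonnegative quadratic program with
    matrix [Q = I + 2 rho w w^T].  Completing the square gives
    [Prox(a) = sgn(a) o x(|a|)], and the KKT conditions put [x(y)] in
    water-filling form, whose level exists by the intermediate value theorem.
    Every candidate [P] for the generalized Jacobian of [x] at [y] satisfies
    [P y = x(y)]: for [P = Q^-1] because then [Q^-1 y >= 0] solves the KKT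
    system, for the reduced inverse [P_K] because [x(y)] vanishes on [K] and
    [Q x(y) - y] vanishes off [K].  Hence [M a = Prox(a)] for every [M] in
    the generalized Jacobian of [Prox] at [a].

    The nonzero signs of [a], the negative entries of [Q^-1 |a|], the support
    of [x(|a|)] and the support of the multiplier all persist near [a], so the
    generalized Jacobian at any [a'] near [a] is contained in the one at [a].
    Therefore [Prox(a') - Prox(a) = M (a' - a)] exactly, for [a'] near [a]
    and [M] at [a']: strong semismoothness holds with no error term, and
    along a ray the difference quotient is locally constant on some interval
    [(0, delta)], hence constant.  The candidates [Q^-1] and [P_K] satisfy
    [P Q P = P], so they and their diagonal congruences are positive
    semidefinite, and the generalized Jacobian at [a] is a finite union of
    continuous images of a box of sign vectors, hence compact. *)

From HB Require Import structures.
From mathcomp Require Import all_boot all_order all_algebra.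
From mathcomp Require Import all_classical all_reals all_analysis.
From mathcomp Require Import ring lra.
Import Order.TTheory GRing.Theory Num.Theory.
Import numFieldNormedType.Exports.
Local Open Scope classical_set_scope.
Local Open Scope ring_scope.
Set Implicit Arguments.
Unset Strict Implicit.
Unset Printing Implicit Defensive.

Section RealFacts.
Variable R : realDomainType.

Lemma sgr_mulr_dist (p q X Y : R) : 0 <= X <= `|p| -> 0 <= Y <= `|q| ->
  `|Num.sg p * X - Num.sg q * Y| <= Num.max `|X - Y| `|p - q|.
Proof.
move=> /andP[X0 Xp] /andP[Y0 Yq]; rewrite le_max.
have [d1 d2] : p - q <= `|p - q| /\ q - p <= `|p - q|.
  by split; [|rewrite distrC]; apply: ler_norm.
have [p0|p0|p0] := ltrgtP p 0; have [q0|q0|q0] := ltrgtP q 0;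
  rewrite ?(ltr0_sg p0) ?(gtr0_sg p0) ?(ltr0_sg q0) ?(gtr0_sg q0) ?p0 ?q0 ?sgr0;
  rewrite ?(ltr0_norm p0) ?(gtr0_norm p0) ?(ltr0_norm q0) ?(gtr0_norm q0) ?p0 ?q0 ?normr0
    in Xp Yq d1 d2;
  try by rewrite -mulrBr normrM ?normrN normr1 mul1r lexx.
all: by apply/orP; right; rewrite ler_norml; apply/andP; split; lra.
Qed.

Lemma sgr_normr_eq (p q : R) : p * q = `|p * q| -> (q = 0 -> p = 0) ->
  p = Num.sg q * `|p|.
Proof.
move=> pq q0p; have pq0 : 0 <= p * q by rewrite pq.
have [q0|q0|q0] := ltrgtP q 0.
- by rewrite ltr0_sg // mulN1r ler0_norm ?opprK // -(nmulr_lge0 _ q0).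
- by rewrite gtr0_sg // mul1r ger0_norm // -(pmulr_lge0 _ q0).
- by rewrite q0p // normr0 mulr0.
Qed.

Lemma ler_sqr_norm (p q : R) : `|p| <= `|q| -> p ^+ 2 <= q ^+ 2.
Proof.
by rewrite -(real_normK (num_real p)) -(real_normK (num_real q)) ler_sqr ?nnegrE.
Qed.

Lemma max0_dist (u v : R) : `|Num.max u 0 - Num.max v 0| <= `|u - v|.
Proof.
have [d1 d2] : u - v <= `|u - v| /\ v - u <= `|u - v|.
  by split; [|rewrite distrC]; apply: ler_norm.
rewrite ler_norml; have [u0|u0] := leP u 0; have [v0|v0] := leP v 0;
  rewrite ?(max_r u0) ?(max_l (ltW u0)) ?(max_r v0) ?(max_l (ltW v0));
  apply/andP; split; lra.
Qed.

End RealFacts.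

Lemma normr_le_sqrt (R : rcfType) (p k m : R) : 0 <= k -> 0 <= m ->
  p ^+ 2 <= k * m ^+ 2 -> `|p| <= Num.sqrt k * m.
Proof.
move=> k0 m0 pkm; rewrite -sqrtr_sqr -[m](ger0_norm m0) -sqrtr_sqr -sqrtrM //.
exact: ler_wsqrtr.
Qed.

Lemma mxBE (V : zmodType) m n (A B : 'M[V]_(m, n)) i j : (A - B) i j = A i j - B i j.
Proof. by rewrite !mxE. Qed.

Lemma mx_unit_of_inj (R : fieldType) n (A : 'M[R]_n) :
  (forall u : 'cV[R]_n, A *m u = 0 -> u = 0) -> A \in unitmx.
Proof.
move=> A_inj; rewrite -unitmx_tr -row_free_unit -kermx_eq0.
apply/eqP/row_matrixP => i; rewrite row0; set u := row i _.
have : A *m u^T = 0.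
  by rewrite -(trmxK A) -trmx_mul /u -row_mul mulmx_ker row0 trmx0.
by move/A_inj/(congr1 trmx); rewrite trmxK trmx0.
Qed.

Lemma near_forall_impl (T : Type) (F : set_system T) {FF : Filter F} (I : finType)
    (P : I -> Prop) (Q : I -> T -> Prop) :
  (forall i, P i -> \forall x \near F, Q i x) -> \forall x \near F, forall i, P i -> Q i x.
Proof.
move=> PQ; apply: filter_forall => i; have [/PQ|nP] := pselect (P i).
  by apply: filterS => x Qx _.
by apply: nearW => x /nP.
Qed.

Section AnalysisFacts.
Variable R : realType.

Lemma mx_entry_le_norm m n (M : 'M[R]_(m, n)) i j : `|M i j| <= `|M|.
Proof.
rewrite [leRHS]/Num.norm /= mx_normrE.
exact: (le_bigmax _ (fun ij : 'I_m * 'I_n => `|M ij.1 ij.2|) (i, j)).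
Qed.

Lemma mx_norm_le_entries m n (M : 'M[R]_(m, n)) e : 0 <= e ->
  (forall i j, `|M i j| <= e) -> `|M| <= e.
Proof.
move=> e0 Me; rewrite [leLHS]/Num.norm /= mx_normrE.
by apply: bigmax_le => // ij _; apply: Me.
Qed.

Lemma mx_norm_mulmx_le m n p (A : 'M[R]_(m, n)) (B : 'M[R]_(n, p)) :
  `|A *m B| <= n%:R * `|A| * `|B|.
Proof.
apply: mx_norm_le_entries => [|i j]; first by rewrite !mulr_ge0.
rewrite mxE -mulrA; apply: le_trans (ler_norm_sum _ _ _) _.
rewrite -[n in n%:R]card_ord -sumr_const mulr_suml; apply: ler_sum => k _.
by rewrite normrM mul1r; apply: ler_pM => //; apply: mx_entry_le_norm.
Qed.

Lemma cvg_mx_entries (T : Type) (F : set_system T) {FF : Filter F} m n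
    (f : T -> 'M[R]_(m, n)) (M : 'M[R]_(m, n)) :
  (forall i j, (fun x => f x i j) @ F --> M i j) -> f @ F --> M.
Proof.
move=> fM; apply/cvgrPdist_le => e e0.
have near_ij (ij : 'I_m * 'I_n) :
    \forall x \near F, `|M ij.1 ij.2 - f x ij.1 ij.2| <= e.
  by have /cvgrPdist_le/(_ e e0) := fM ij.1 ij.2.
rewrite near_map; apply: filterS (filter_forall _ near_ij) => x fx.
apply: mx_norm_le_entries => [|i j]; first exact: ltW.
by rewrite !mxE; exact: (fx (i, j)).
Qed.

Lemma cvg_mx_coord (T : topologicalType) m n (g : T -> 'M[R]_(m, n)) a i j :
  {for a, continuous g} -> (fun x => g x i j) @ a --> g a i j.
Proof.
by move=> g_cont; apply: continuous_comp g_cont (@coord_continuous _ _ _ i j (g a)).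
Qed.

Lemma lipschitz_cvg (V W : normedModType R) (f : V -> W) (k : R) (x : V) :
  (forall y, `|f y - f x| <= k * `|y - x|) -> f @ x --> f x.
Proof.
move=> fk; apply/cvgrPdist_lt => e e0.
have k1 : 0 < `|k| + 1 := ltr_wpDl (normr_ge0 k) ltr01.
apply/nbhs_normP; exists (e / (`|k| + 1)) => [|y /= xy]; first exact: divr_gt0.
rewrite distrC in xy; rewrite -normrN opprB; apply: le_lt_trans (fk y) _.
apply: (@le_lt_trans _ _ (`|k| * `|y - x|)); first by rewrite ler_wpM2r // ler_norm.
apply: (@le_lt_trans _ _ (`|k| * (e / (`|k| + 1)))); first by rewrite ler_wpM2l // ltW.
by rewrite mulrA ltr_pdivrMr //; nra.
Qed.

Lemma mulmx_continuous m n (A : 'M[R]_(m, n)) : continuous (mulmx A : 'M[R]_(n, 1) -> _).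
Proof.
move=> x; apply: (lipschitz_cvg (k := n%:R * `|A|)) => y.
by rewrite -mulmxBr mx_norm_mulmx_le.
Qed.

Lemma near_along_line (V : normedModType R) (a d : V) (s0 : R) (P : V -> Prop) :
  (\forall x \near a + s0 *: d, P x) -> \forall s \near s0, P (a + s *: d).
Proof.
have line_cvg : (fun s : R => a + s *: d) @ s0 --> a + s0 *: d.
  by apply: cvgD; [exact: cvg_cst | exact: scalel_continuous].
exact: line_cvg.
Qed.

Lemma itvoo_locally_constant (T : Type) (f : R -> T) (a b : R) :
  {in `]a, b[, forall x, \forall y \near x, f y = f x} ->
  {in `]a, b[ &, forall x y, f x = f y}.
Proof.
move=> floc x y xab yab; wlog xy : x y xab yab / x <= y.
  move=> H; have [/H|/ltW/H] := leP x y; first exact.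
  by move=> /(_ yab xab).
apply: contrapT => fxy.
pose g s : R := if `[< f s = f x >] then 0 else 1.
have g01 s : g s = 0 \/ g s = 1 by rewrite /g; case: asboolP; [left | right].
have gcont : {within `[x, y], continuous g}.
  apply: continuous_in_subspaceT => s; rewrite inE /= => sxy.
  have sab : s \in `]a, b[.
    move: xab yab sxy; rewrite !in_itv /= => /andP[? ?] /andP[? ?] /andP[? ?].
    by apply/andP; split; lra.
  apply: (near_cst_continuous (g s)); apply: filterS (floc s sab) => u fu.
  by rewrite /g fu.
have [gx gy] : g x = 0 /\ g y = 1.
  by rewrite /g; split; case: asboolP => // /esym.
have [c _ gc] : exists2 c, c \in `[x, y] & g c = 2^-1.
  apply: IVT xy gcont _.
  by rewrite gx gy ge_min le_max invr_ge0 ler0n /= invf_le1 ?ltr0n // ler1n orbT.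
have := g01 c; rewrite gc => -[] /eqP; rewrite ?invr_eq0 ?pnatr_eq0 //.
by rewrite invr_eq1 (eqr_nat R 2 1).
Qed.

End AnalysisFacts.

(** * Multifunctions that shrink locally *)

Section ShrinkingJacobian.
Variables (R : realType) (t : nat).
Variables (F : 'cV[R]_t -> 'cV[R]_t) (J : 'cV[R]_t -> 'M[R]_t -> Prop).
Hypothesis J_neq0 : forall a, exists M, J a M.
Hypothesis J_shrink : forall a, \forall x \near a, forall M, J x M -> J a M.
Hypothesis J_apply : forall a M, J a M -> M *m a = F a.

Lemma shrinking_usc : upper_semicontinuous_mf J.
Proof. by move=> a U _ JaU; apply: filterS (J_shrink a) => x Jxa M /Jxa /JaU. Qed.

Lemma shrinking_linear_near a :
  \forall x \near a, forall M, J x M -> F x - F a = M *m (x - a).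
Proof.
apply: filterS (J_shrink a) => x Jxa M JxM.
by rewrite mulmxBr (J_apply JxM) (J_apply (Jxa M JxM)).
Qed.

Lemma shrinking_dir_differentiable a : dir_differentiable F a.
Proof.
move=> d; pose h s := s^-1 *: (F (a + s *: d) - F a).
have [del del0 h_lin] : exists2 del : R, 0 < del &
    forall s, 0 < s < del -> forall M, J (a + s *: d) M -> h s = M *m d.
  have := @near_along_line R _ a d 0; rewrite scale0r addr0.
  move=> /(_ _ (shrinking_linear_near a)).
  case/nbhs_ballP => del del0 hdel; exists del => // s /andP[s0 sdel] M JM.
  have s_ball : ball 0 del s by rewrite /ball /= sub0r normrN gtr0_norm.
  rewrite /h (hdel s s_ball M JM) addrC addKr -scalemxAr scalerA mulVf ?scale1r //.
  by rewrite gt_eqF.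
have h_loc : {in `]0, del[, forall s0, \forall s \near s0, h s = h s0}.
  move=> s0 s0del; have near_J := @near_along_line R _ a d s0 _ (J_shrink (a + s0 *: d)).
  apply: filterS (filterI (near_in_itvoo s0del) near_J) => s [sdel Js].
  have [M JM] := J_neq0 (a + s *: d).
  rewrite in_itv /= in sdel s0del.
  by rewrite (h_lin s sdel M JM) (h_lin s0 s0del M (Js M JM)).
exists (h (del / 2)); apply: cvg_near_cst.
apply: filterS (filterI (nbhs_right_gt 0) (nbhs_right_lt del0)) => s [s0 sdel].
apply: (itvoo_locally_constant h_loc); rewrite in_itv /= ?s0 ?sdel //.
by rewrite divr_gt0 // ltr_pdivrMr // ltr_pMr // ltr1n.
Qed.

Lemma shrinking_strongly_semismooth_at a : strongly_semismooth_at F J a.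
Proof.
split; first exact: shrinking_dir_differentiable.
exists 1 => //; apply: filterS (shrinking_linear_near a) => x lin M JM.
by rewrite (lin M JM) subrr normr0 mul1r exprn_ge0.
Qed.

End ShrinkingJacobian.

Section InnerProduct.
Variables (R : realType) (t : nat).
Implicit Types (u v x y : 'cV[R]_t).

Lemma innerE u v : inner u v = (u^T *m v) 0 0.
Proof. by rewrite mxE; apply: eq_bigr => i _; rewrite mxE. Qed.

Lemma innerC u v : inner u v = inner v u.
Proof. by apply: eq_bigr => i _; rewrite mulrC. Qed.

Lemma innerBl x y v : inner (x - y) v = inner x v - inner y v.
Proof. by rewrite /inner -sumrB; apply: eq_bigr => i _; rewrite !mxE mulrBl. Qed.

Lemma innerNl x v : inner (- x) v = - inner x v.
Proof. by rewrite /inner -sumrN; apply: eq_bigr => i _; rewrite mxE mulNr. Qed.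

Lemma innerBr v x y : inner v (x - y) = inner v x - inner v y.
Proof. by rewrite innerC innerBl !(innerC v). Qed.

Lemma inner_trmx (M : 'M[R]_t) u v : inner u (M^T *m v) = inner (M *m u) v.
Proof. by rewrite !innerE mulmxA -trmx_mul. Qed.

Lemma inner_sym_mx (M : 'M[R]_t) u v : M^T = M -> inner u (M *m v) = inner (M *m u) v.
Proof. by move=> MT; rewrite -{1}MT inner_trmx. Qed.

Lemma sqnormE v : sqnorm v = inner v v.
Proof. by apply: eq_bigr => i _; rewrite expr2. Qed.

Lemma sqnorm_ge0 v : 0 <= sqnorm v.
Proof. by apply: sumr_ge0 => i _; rewrite sqr_ge0. Qed.

Lemma sqnorm_eq0 v : sqnorm v = 0 -> v = 0.
Proof.
move=> /eqP; rewrite psumr_eq0 => [/allP v0|i _]; last exact: sqr_ge0.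
apply/matrixP => i j; rewrite (ord1 j) mxE.
by have := v0 i (mem_index_enum _); rewrite sqrf_eq0 => /eqP.
Qed.

Lemma sqr_coord_le_sqnorm v i : v i 0 ^+ 2 <= sqnorm v.
Proof. by rewrite /sqnorm (bigD1 i) //= lerDl sumr_ge0 // => j _; rewrite sqr_ge0. Qed.

Lemma inner_le_sqnormD u v : 2 * inner u v <= sqnorm u + sqnorm v.
Proof.
have := sqnorm_ge0 (u - v).
by rewrite !sqnormE !innerBl !innerBr (innerC v u) subr_ge0; lra.
Qed.

Lemma sqnorm_le_mx_norm v : sqnorm v <= t%:R * `|v| ^+ 2.
Proof.
apply: le_trans (_ : \sum_(i < t) `|v| ^+ 2 <= _); last first.
  by rewrite sumr_const card_ord mulr_natl.
apply: ler_sum => i _; apply: ler_sqr_norm; rewrite normr_id.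
exact: mx_entry_le_norm.
Qed.

End InnerProduct.

Section SignVectors.
Variables (R : realType) (t : nat).
Implicit Types (a v theta : 'cV[R]_t).

Lemma absvE v i : absv v i 0 = `|v i 0|.
Proof. by rewrite mxE. Qed.

Lemma absv_lipschitz (x y : 'cV[R]_t) : `|absv x - absv y| <= `|x - y|.
Proof.
apply: mx_norm_le_entries => // i j; rewrite (ord1 j) !mxE.
apply: le_trans (@ler_dist_dist _ R^o _ _) _.
by rewrite -mxBE mx_entry_le_norm.
Qed.

Lemma absv_continuous : continuous (@absv R t).
Proof. by move=> x; apply: (lipschitz_cvg (k := 1)) => y; rewrite mul1r absv_lipschitz. Qed.

Definition sgv a : 'cV[R]_t := \col_i Num.sg (a i 0).

Lemma SGN_sgv a : SGN a (sgv a).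
Proof. by move=> j; split=> [|a0]; rewrite mxE // a0 sgr0 lerN10 ler01. Qed.

Lemma Diagv_mulE theta v i : (Diagv theta *m v) i 0 = theta i 0 * v i 0.
Proof. by rewrite /Diagv mul_diag_mx !mxE. Qed.

Lemma Diagv_sym theta : (Diagv theta)^T = Diagv theta.
Proof. exact: tr_diag_mx. Qed.

Lemma SGN_Diagv_mul a theta : SGN a theta -> Diagv theta *m a = absv a.
Proof.
move=> th; apply/matrixP => i j; rewrite (ord1 j) Diagv_mulE absvE.
have [->|a0] := eqVneq (a i 0) 0; first by rewrite mulr0 normr0.
by rewrite (th i).1 // -normrEsg.
Qed.

Definition sign_box a : set 'rV[R]_t :=
  [set r | forall i,
    (if a i 0 == 0 then `[-1, 1]%classic else [set Num.sg (a i 0)]) (r 0 i)].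

Lemma sign_box_compact a : compact (sign_box a).
Proof.
apply: (@rV_compact R^o t (fun i =>
  if a i 0 == 0 then `[-1, 1]%classic else [set Num.sg (a i 0)])) => i.
by case: ifP => _; [apply: segment_compact | apply: compact_set1].
Qed.

Lemma SGN_sign_box a theta : SGN a theta <-> sign_box a theta^T.
Proof.
split=> [aT i|box j]; rewrite ?mxE.
  by case: eqP => [a0|/eqP a0] /=; [rewrite in_itv /=; apply: (aT i).2 | rewrite (aT i).1].
have := box j; rewrite mxE; case: eqP => [a0|/eqP a0] /= thj.
  by split=> // /eqP; rewrite a0 eqxx.
by split=> // a0'; move: a0; rewrite a0' eqxx.
Qed.

Definition diag_congr (P : 'M[R]_t) (r : 'rV[R]_t) : 'M[R]_t := diag_mx r *m P *m diag_mx r.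

Lemma diag_congr_continuous P : continuous (diag_congr P).
Proof.
move=> r; apply: (cvg_mx_entries (FF := nbhs_filter r)) => i j.
have entry r' : diag_congr P r' i j = r' 0 i * P i j * r' 0 j.
  by rewrite /diag_congr mul_mx_diag mul_diag_mx !mxE.
rewrite entry; under eq_cvg do rewrite entry.
apply: cvgM; last exact: coord_continuous.
by apply: cvgM; [apply: coord_continuous | apply: cvg_cst].
Qed.

End SignVectors.

Section ProxJacobian.
Variables (R : realType) (t : nat) (w : 'cV[R]_t) (rho : R).
Hypothesis rho_ge0 : 0 <= rho.
Hypothesis w_ge0 : forall i, 0 <= w i 0.
Implicit Types (a x y z v : 'cV[R]_t).

Local Notation c := (2 * rho).
Local Notation Q := (Qmat rho w).
Local Notation Qi := (Qinv rho w).
Local Notation xsol := (xsol rho w).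

(** * The nonnegative quadratic program *)

Lemma c_ge0 : 0 <= c. Proof. by rewrite mulr_ge0. Qed.

Lemma Qmat_mulE x i : (Q *m x) i 0 = x i 0 + c * w i 0 * inner w x.
Proof.
rewrite /Qmat mulmxDl mul1mx -scalemxAl -mulmxA !mxE big_ord1 !mxE.
rewrite mulrA; congr (_ + _ * _).
by apply: eq_bigr => j _; rewrite mxE.
Qed.

Lemma inner_Qmat y x : inner y (Q *m x) = inner y x + c * inner w y * inner w x.
Proof.
rewrite /inner; under eq_bigr do rewrite Qmat_mulE mulrDr.
rewrite big_split /= -/(inner w x) -mulrA mulr_suml mulr_sumr; congr (_ + _).
by apply: eq_bigr => i _; ring.
Qed.

Lemma sqnorm_le_inner_Qmat x : sqnorm x <= inner x (Q *m x).
Proof. by rewrite inner_Qmat sqnormE lerDl -mulrA mulr_ge0 ?c_ge0 // -expr2 sqr_ge0. Qed.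

Lemma Qmat_sym : Q^T = Q.
Proof. by rewrite /Qmat linearD /= trmx1 linearZ /= trmx_mul trmxK. Qed.

Lemma Qmat_unit : Q \in unitmx.
Proof.
apply: mx_unit_of_inj => u Qu0; apply: sqnorm_eq0; apply/le_anti.
rewrite sqnorm_ge0 andbT (le_trans (sqnorm_le_inner_Qmat u)) // Qu0.
by rewrite /inner big1 // => i _; rewrite mxE mulr0.
Qed.

Lemma Qmat_Qinv : Q *m Qi = 1%:M. Proof. exact: mulmxV Qmat_unit. Qed.

Lemma Qinv_sym : Qi^T = Qi. Proof. by rewrite /Qinv trmx_inv Qmat_sym. Qed.

Lemma sqnorm_le_inner_Qinv v : sqnorm (Qi *m v) <= inner v (Qi *m v).
Proof.
rewrite innerC -{3}[v]mul1mx -Qmat_Qinv -mulmxA.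
exact: sqnorm_le_inner_Qmat.
Qed.

Lemma inner_Qinv_ge0 v : 0 <= inner v (Qi *m v).
Proof. exact: le_trans (sqnorm_ge0 _) (sqnorm_le_inner_Qinv v). Qed.

Lemma inner_Qinv_gt0 v : v != 0 -> 0 < inner v (Qi *m v).
Proof.
move=> v0; apply: lt_le_trans (sqnorm_le_inner_Qinv v).
rewrite lt_neqAle sqnorm_ge0 andbT eq_sym; apply: contra v0 => /eqP/sqnorm_eq0 Qiv0.
by rewrite -[v]mul1mx -Qmat_Qinv -mulmxA Qiv0 mulmx0.
Qed.

Definition KKT a x : Prop := [/\ nonneg_vec x, forall i, a i 0 <= (Q *m x) i 0 &
  forall i, 0 < x i 0 -> (Q *m x) i 0 = a i 0].

Lemma KKT_variational a x z : KKT a x -> nonneg_vec z ->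
  0 <= inner (z - x) (Q *m x - a).
Proof.
move=> [x0 ax xQ] z0; rewrite innerBl.
have -> : inner x (Q *m x - a) = 0.
  rewrite /inner big1 // => i _; rewrite mxBE.
  have := x0 i; rewrite le_eqVlt => /orP[/eqP <-|/xQ ->]; first by rewrite mul0r.
  by rewrite subrr mulr0.
rewrite subr0; apply: sumr_ge0 => i _; rewrite mxBE.
by rewrite mulr_ge0 // subr_ge0.
Qed.

Lemma qp_obj_diff a x y : qp_obj rho w a y - qp_obj rho w a x =
  inner (y - x) (Q *m x - a) + 2^-1 * sqnorm (y - x) + rho * inner w (y - x) ^+ 2.
Proof.
rewrite /qp_obj !inner_Qmat !sqnormE !innerBl !innerBr !inner_Qmat (innerC x y).
by field.
Qed.

Lemma KKT_qp_growth a x y : KKT a x -> nonneg_vec y ->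
  qp_obj rho w a x + 2^-1 * sqnorm (y - x) <= qp_obj rho w a y.
Proof.
move=> ax y0; have := KKT_variational ax y0; have := qp_obj_diff a x y.
have : 0 <= rho * inner w (y - x) ^+ 2 by rewrite mulr_ge0 ?sqr_ge0.
lra.
Qed.

(* The KKT point has the form [x_i = max (a_i - c w_i s) 0] with [s = <w, x>];
   the level [s] is a zero of [waterfill_gap]. *)
Definition waterfill a s : 'cV[R]_t := \col_i Num.max (a i 0 - c * w i 0 * s) 0.

Definition waterfill_gap a s : R := s - inner w (waterfill a s).

Lemma waterfill_ge0 a s : nonneg_vec (waterfill a s).
Proof. by move=> i; rewrite mxE le_max lexx orbT. Qed.

Lemma waterfill_gap_continuous a : continuous (waterfill_gap a).
Proof.
move=> s0; apply: (lipschitz_cvg (V := R^o) (W := R^o)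
  (k := 1 + \sum_(i < t) w i 0 * (c * w i 0))).
move=> s; rewrite /waterfill_gap /inner.
have -> : s - \sum_i w i 0 * waterfill a s i 0 - (s0 - \sum_i w i 0 * waterfill a s0 i 0)
    = (s - s0) - \sum_i w i 0 * (waterfill a s i 0 - waterfill a s0 i 0).
  by under [in RHS]eq_bigr do rewrite mulrBr; rewrite sumrB; ring.
apply: le_trans (ler_normB _ _) _; rewrite mulrDl mul1r lerD2l mulr_suml.
apply: le_trans (ler_norm_sum _ _ _) _; apply: ler_sum => i _.
rewrite normrM ger0_norm // -mulrA ler_wpM2l // !mxE.
apply: le_trans (max0_dist _ _) _.
have -> : a i 0 - c * w i 0 * s - (a i 0 - c * w i 0 * s0) = - (c * w i 0) * (s - s0).
  by ring.
by rewrite normrM normrN (ger0_norm (mulr_ge0 c_ge0 (w_ge0 i))).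
Qed.

Lemma KKT_waterfill a s : waterfill_gap a s = 0 -> KKT a (waterfill a s).
Proof.
move=> /eqP; rewrite subr_eq0 => /eqP s_eq; split; first exact: waterfill_ge0.
  move=> i; rewrite Qmat_mulE -s_eq mxE.
  have : a i 0 - c * w i 0 * s <= Num.max (a i 0 - c * w i 0 * s) 0 by rewrite le_max lexx.
  lra.
move=> i; rewrite Qmat_mulE -s_eq mxE lt_max ltxx orbF => pos.
by rewrite (max_l (ltW pos)); ring.
Qed.

Lemma KKT_exists a : exists x, KKT a x.
Proof.
pose S := \sum_(i < t) w i 0 * Num.max (a i 0) 0.
have S0 : 0 <= S by apply: sumr_ge0 => i _; rewrite mulr_ge0 // le_max lexx orbT.
have gap0 : waterfill_gap a 0 <= 0.
  rewrite /waterfill_gap sub0r oppr_le0; apply: sumr_ge0 => i _.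
  by rewrite mulr_ge0 // waterfill_ge0.
have gapS : 0 <= waterfill_gap a S.
  rewrite /waterfill_gap subr_ge0 /inner; apply: ler_sum => i _; rewrite mxE.
  rewrite ler_wpM2l // ge_max [0 <= _]le_max lexx orbT andbT le_max gerBl //.
  by rewrite !mulr_ge0 ?c_ge0.
have [s _ gap_s] : exists2 s, s \in `[0, S] & waterfill_gap a s = 0.
  apply: IVT S0 (continuous_subspaceT (@waterfill_gap_continuous a)) _.
  by rewrite ge_min gap0 /= le_max gapS orbT.
by exists (waterfill a s); apply: KKT_waterfill.
Qed.

Lemma KKT_xsol a x : KKT a x -> xsol a = x.
Proof.
move=> ax; have [x0 _ _] := ax.
have ex_min : exists z, [set z | nonneg_vec z /\
    forall z', nonneg_vec z' -> qp_obj rho w a z <= qp_obj rho w a z'] z.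
  exists x; split => // y y0; apply: le_trans (KKT_qp_growth ax y0).
  by rewrite lerDl mulr_ge0 ?sqnorm_ge0.
have [z0 zmin] := xgetPex 0 ex_min.
rewrite /xsol; set z := xget _ _ in z0 zmin *.
have := zmin x x0; have := KKT_qp_growth ax z0; have := sqnorm_ge0 (z - x).
move=> d0 zx xz; have : sqnorm (z - x) = 0 by lra.
by move/sqnorm_eq0/eqP; rewrite subr_eq0 => /eqP.
Qed.

Lemma xsol_KKT a : KKT a (xsol a).
Proof. by have [x ax] := KKT_exists a; rewrite (KKT_xsol ax). Qed.

Lemma xsol_ge0 a i : 0 <= xsol a i 0.
Proof. by have [x0 _ _] := xsol_KKT a; apply: x0. Qed.

Lemma xsol_le_max a i : xsol a i 0 <= Num.max (a i 0) 0.
Proof.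
have [_ _ xQ] := xsol_KKT a.
have := xsol_ge0 a i; rewrite le_eqVlt => /orP[/eqP <-|/xQ]; first by rewrite le_max lexx orbT.
rewrite Qmat_mulE => <-; rewrite le_max lerDl mulr_ge0 ?mulr_ge0 ?c_ge0 //.
by apply: sumr_ge0 => j _; rewrite mulr_ge0 ?xsol_ge0.
Qed.

Lemma xsol_eq0 a i : a i 0 <= 0 -> xsol a i 0 = 0.
Proof.
move=> a0; apply/le_anti; rewrite xsol_ge0 andbT.
by apply: le_trans (xsol_le_max a i) _; rewrite ge_max a0 lexx.
Qed.

Lemma xsol_nonexpansive y1 y2 : sqnorm (xsol y1 - xsol y2) <= sqnorm (y1 - y2).
Proof.
set d := xsol y1 - xsol y2; set e := y1 - y2.
have monotone : inner d (Q *m d) <= inner d e.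
  have v1 := KKT_variational (xsol_KKT y1) (xsol_ge0 y2).
  have v2 := KKT_variational (xsol_KKT y2) (xsol_ge0 y1).
  rewrite -opprB innerNl -/d innerBr in v1; rewrite -/d innerBr in v2.
  rewrite /e mulmxBr !innerBr; lra.
have := inner_le_sqnormD d e; have := sqnorm_le_inner_Qmat d; lra.
Qed.

Lemma xsol_lipschitz y1 y2 : `|xsol y1 - xsol y2| <= Num.sqrt t%:R * `|y1 - y2|.
Proof.
apply: mx_norm_le_entries => [|i j]; first by rewrite mulr_ge0 ?sqrtr_ge0.
rewrite (ord1 j) normr_le_sqrt //; apply: le_trans (sqr_coord_le_sqnorm _ i) _.
exact: le_trans (xsol_nonexpansive y1 y2) (sqnorm_le_mx_norm _).
Qed.

Lemma xsol_continuous : continuous xsol.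
Proof. by move=> y; apply: lipschitz_cvg => y'; apply: xsol_lipschitz. Qed.

(** * The proximal map *)

Definition prox_sol a : 'cV[R]_t := \col_i (Num.sg (a i 0) * xsol (absv a) i 0).

Definition sign_gap z a : R := inner (absv z) (absv a) - inner z a.

Lemma sign_gap_ge0 z a : 0 <= sign_gap z a.
Proof.
rewrite /sign_gap /inner -sumrB; apply: sumr_ge0 => i _.
by rewrite !absvE subr_ge0 -normrM ler_norm.
Qed.

Lemma sign_gap_eq0 z a : sign_gap z a = 0 ->
  forall i, z i 0 * a i 0 = `|z i 0 * a i 0|.
Proof.
rewrite /sign_gap /inner -sumrB => /eqP; rewrite psumr_eq0 => [/allP gap0 i|i _].
  by have := gap0 i (mem_index_enum _); rewrite /= !absvE -normrM subr_eq0 => /eqP.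
by rewrite !absvE subr_ge0 -normrM ler_norm.
Qed.

Lemma prox_obj_decomp a z : prox_obj rho w a z =
  qp_obj rho w (absv a) (absv z) + 2^-1 * sqnorm (absv a) + sign_gap z a.
Proof.
have l1 : \sum_(i < t) `|w i 0 * z i 0| = inner w (absv z).
  by apply: eq_bigr => i _; rewrite absvE normrM ger0_norm.
have sq v : inner (absv v) (absv v) = inner v v.
  by apply: eq_bigr => i _; rewrite !absvE -normrM ger0_norm // -expr2 sqr_ge0.
rewrite /prox_obj /sign_gap l1 /qp_obj inner_Qmat !sqnormE !innerBl !innerBr !sq.
by rewrite (innerC a z); field.
Qed.

Lemma absv_prox_sol a : absv (prox_sol a) = xsol (absv a).
Proof.
apply/matrixP => i j; rewrite (ord1 j) absvE mxE normrM.
have [a0|a0|a0] := ltrgtP (a i 0) 0.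
- by rewrite ltr0_sg // normrN1 mul1r ger0_norm // xsol_ge0.
- by rewrite gtr0_sg // normr1 mul1r ger0_norm // xsol_ge0.
- by rewrite a0 sgr0 normr0 mul0r xsol_eq0 // absvE a0 normr0.
Qed.

Lemma sign_gap_prox_sol a : sign_gap (prox_sol a) a = 0.
Proof.
rewrite /sign_gap absv_prox_sol /inner -sumrB big1 // => i _.
by rewrite !mxE mulrAC -normrEsg mulrC subrr.
Qed.

Lemma prox_obj_growth a z : prox_obj rho w a (prox_sol a) +
  (2^-1 * sqnorm (absv z - xsol (absv a)) + sign_gap z a) <= prox_obj rho w a z.
Proof.
rewrite !prox_obj_decomp sign_gap_prox_sol absv_prox_sol addr0.
have := KKT_qp_growth (xsol_KKT (absv a)) (y := absv z).
have absz0 : nonneg_vec (absv z) by move=> i; rewrite absvE.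
move=> /(_ absz0); lra.
Qed.

Lemma ProxE a : Prox rho w a = prox_sol a.
Proof.
have ex_min : exists z, [set z | forall z', prox_obj rho w a z <= prox_obj rho w a z'] z.
  exists (prox_sol a) => z /=; apply: le_trans (prox_obj_growth a z).
  by rewrite lerDl addr_ge0 ?sign_gap_ge0 ?mulr_ge0 ?sqnorm_ge0.
have zmin := xgetPex 0 ex_min; rewrite /Prox; set z := xget _ _ in zmin *.
have := zmin (prox_sol a); have := prox_obj_growth a z.
have := sqnorm_ge0 (absv z - xsol (absv a)); have := sign_gap_ge0 z a.
move=> gap0 sq0 growth zle.
have /sqnorm_eq0/eqP : sqnorm (absv z - xsol (absv a)) = 0 by lra.
rewrite subr_eq0 => /eqP abs_z.
have /sign_gap_eq0 za : sign_gap z a = 0 by lra.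
apply/matrixP => i j; rewrite (ord1 j) mxE -abs_z absvE.
apply: sgr_normr_eq (za i) _ => a0.
by apply/normr0_eq0; rewrite -absvE abs_z xsol_eq0 // absvE a0 normr0.
Qed.

Lemma Prox_lipschitz x y :
  `|Prox rho w x - Prox rho w y| <= (Num.sqrt t%:R + 1) * `|x - y|.
Proof.
apply: mx_norm_le_entries => [|i j]; first by rewrite mulr_ge0 ?addr_ge0 ?sqrtr_ge0.
have X_le v : 0 <= xsol (absv v) i 0 <= `|v i 0|.
  by rewrite xsol_ge0 (le_trans (xsol_le_max _ _)) // absvE ge_max lexx normr_ge0.
rewrite (ord1 j) mxBE !ProxE !mxE; apply: le_trans (sgr_mulr_dist (X_le x) (X_le y)) _.
rewrite ge_max -!mxBE; apply/andP; split.
  apply: le_trans (mx_entry_le_norm _ i 0) _; apply: le_trans (xsol_lipschitz _ _) _.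
  by rewrite mulrDl mul1r ler_wpDr // ler_wpM2l ?sqrtr_ge0 // absv_lipschitz.
by rewrite mulrDl mul1r ler_wpDl ?mulr_ge0 ?sqrtr_ge0 // mx_entry_le_norm.
Qed.

(** * The generalized Jacobian *)

Section ReducedInverse.
Variable K : {set 'I_t}.
Local Notation B := (IK R K).
Local Notation G := (B *m Qi *m B^T).
Local Notation P := (PK rho w K).

Lemma IK_IKT : B *m B^T = 1%:M.
Proof.
apply/matrixP => k l; rewrite !mxE (bigD1 (enum_val k)) //= big1 ?addr0.
  by rewrite !mxE eqxx mul1r (inj_eq enum_val_inj) eq_sym.
by move=> j jk; rewrite !mxE eq_sym (negbTE jk) mul0r.
Qed.

Lemma IK_Qinv_IKT_unit : G \in unitmx.
Proof.
apply: mx_unit_of_inj => u Gu0; have [BTu0|BTu0] := eqVneq (B^T *m u) 0.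
  by move/(congr1 (mulmx B)): BTu0; rewrite mulmxA IK_IKT mul1mx mulmx0.
have := inner_Qinv_gt0 BTu0.
have -> : inner (B^T *m u) (Qi *m (B^T *m u)) = (u^T *m (G *m u)) 0 0.
  by rewrite innerE trmx_mul trmxK !mulmxA.
by rewrite Gu0 mulmx0 mxE ltxx.
Qed.

Lemma IK_PK : B *m P = 0.
Proof. by rewrite /PK mulmxBr !mulmxA (mulmxV IK_Qinv_IKT_unit) mul1mx subrr. Qed.

Lemma Qmat_PK : Q *m P = 1%:M - B^T *m (invmx G *m B *m Qi).
Proof. by rewrite /PK mulmxBr !mulmxA Qmat_Qinv !mul1mx. Qed.

Lemma PK_sym : P^T = P.
Proof.
rewrite /PK linearB /= !trmx_mul trmxK Qinv_sym trmx_inv !trmx_mul trmxK Qinv_sym.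
by rewrite !mulmxA.
Qed.

Lemma PK_IKT : P *m B^T = 0.
Proof. by rewrite -PK_sym -trmx_mul IK_PK trmx0. Qed.

Lemma PK_psd v : 0 <= inner v (P *m v).
Proof.
have PQP : P *m (Q *m P) = P by rewrite Qmat_PK mulmxBr mulmx1 mulmxA PK_IKT mul0mx subr0.
have -> : inner v (P *m v) = inner (P *m v) (Q *m (P *m v)).
  by rewrite -inner_trmx PK_sym !mulmxA -(mulmxA P Q P) PQP.
exact: le_trans (sqnorm_ge0 _) (sqnorm_le_inner_Qmat _).
Qed.

Lemma IK_mulE x j (jK : j \in K) : (B *m x) (enum_rank_in jK j) 0 = x j 0.
Proof.
rewrite mxE (bigD1 j) //= big1 ?addr0; first by rewrite mxE enum_rankK_in // eqxx mul1r.
by move=> l lj; rewrite mxE enum_rankK_in // eq_sym (negbTE lj) mul0r.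
Qed.

Lemma IKT_mulE (u : 'cV[R]_#|K|) j : j \notin K -> (B^T *m u) j 0 = 0.
Proof.
move=> jK; rewrite mxE big1 // => k _; rewrite !mxE.
by case: eqP => [kj|]; [move: jK; rewrite -kj enum_valP | rewrite mul0r].
Qed.

End ReducedInverse.

Lemma complementary_Qmat_eq0 (K : {set 'I_t}) (d : 'cV[R]_t) :
  (forall j, j \in K -> d j 0 = 0) -> (forall j, j \notin K -> (Q *m d) j 0 = 0) ->
  d = 0.
Proof.
move=> dK Qd; apply: sqnorm_eq0; apply/le_anti; rewrite sqnorm_ge0 andbT.
apply: le_trans (sqnorm_le_inner_Qmat d) _; rewrite le_eqVlt /inner big1 ?eqxx // => j _.
by case: (boolP (j \in K)) => jK; [rewrite dK // mul0r | rewrite Qd // mulr0].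
Qed.

Lemma PK_mul_xsol y K : Kfam rho w y K -> PK rho w K *m y = xsol y.
Proof.
move=> [suppK KI]; apply/eqP; rewrite -subr_eq0; apply/eqP.
apply: (complementary_Qmat_eq0 (K := K)) => j jK.
  have := fintype.subsetP KI j jK; rewrite inE => /eqP xj.
  by rewrite mxBE -(IK_mulE _ jK) mulmxA IK_PK mul0mx mxE xj subrr.
rewrite mulmxBr mxBE mulmxA Qmat_PK mulmxBl mul1mx mxBE -!mulmxA IKT_mulE // subr0.
have : j \notin suppmu rho w y by apply: contra jK; apply: (fintype.subsetP suppK).
by rewrite inE negbK /mult mxBE subr_eq0 => /eqP ->; rewrite subrr.
Qed.

Lemma Qinv_mul_xsol y : (forall i, 0 <= (Qi *m y) i 0) -> Qi *m y = xsol y.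
Proof.
by move=> Qiy0; apply/esym/KKT_xsol; split=> // i; rewrite mulmxA Qmat_Qinv mul1mx.
Qed.

Lemma PK_set0 : PK rho w finset.set0 = Qi.
Proof.
rewrite /PK; have -> : Qi *m (IK R finset.set0)^T = 0.
  by apply/matrixP => i [k k0]; exfalso; move: k0; rewrite cards0.
by rewrite !mul0mx subr0.
Qed.

Lemma hatJP y P : hatJ rho w y P <->
  ((forall i, 0 <= (Qi *m y) i 0) /\ P = Qi) \/ exists2 K, Kfam rho w y K & P = PK rho w K.
Proof.
rewrite /hatJ; case: asboolP => [Qiy_gt0|Qiy_ngt0].
  split=> [->|[[_ ->] //|[K [_ KI] ->]]]; first by left; split=> // i; apply: ltW.
  (* [x(y) = Q^-1 y] has no zero entry, so [K] must be empty. *)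
  rewrite -PK_set0; congr PK; apply/setP => j; rewrite inE; apply/negbTE/negP => jK.
  have := fintype.subsetP KI j jK; rewrite inE -Qinv_mul_xsol => [/eqP Qiy0|i].
    by have := Qiy_gt0 j; rewrite Qiy0 ltxx.
  exact: ltW.
case: asboolP => [[i Qiy_lt0]|Qiy_nlt0].
  split=> [|[[Qiy_ge0 _]|//]]; first by right.
  by have := Qiy_ge0 i; rewrite leNgt Qiy_lt0.
split=> [[->|PK_case]|[[_ ->]|PK_case]]; [left | by right | by left | by right].
by split=> // i; rewrite leNgt; apply/negP => Qiy_lt0; apply: Qiy_nlt0; exists i.
Qed.

Lemma hatJ_mul_xsol y P : hatJ rho w y P -> P *m y = xsol y.
Proof.
by move/hatJP => [[Qiy0 ->]|[K yK ->]]; [apply: Qinv_mul_xsol | apply: PK_mul_xsol].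
Qed.

Lemma Kfam_Iset y : Kfam rho w y (Iset rho w y).
Proof.
split=> //; apply/fintype.subsetP => j; rewrite !inE /mult mxBE => mu_ne0.
have [_ _ xQ] := xsol_KKT y; have := xsol_ge0 y j.
rewrite le_eqVlt => /orP[/eqP <- //|/xQ Qx_eq].
by move: mu_ne0; rewrite Qx_eq subrr eqxx.
Qed.

Lemma hatJ_neq0 y : exists P, hatJ rho w y P.
Proof.
exists (PK rho w (Iset rho w y)); apply/hatJP; right.
by exists (Iset rho w y) => //; apply: Kfam_Iset.
Qed.

Lemma hatJ_psd y P : hatJ rho w y P -> P^T = P /\ forall v, 0 <= inner v (P *m v).
Proof.
move/hatJP => [[_ ->]|[K _ ->]]; last by split; [apply: PK_sym | apply: PK_psd].
by split=> [|v]; [apply: Qinv_sym | apply: inner_Qinv_ge0].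
Qed.

Lemma dHS_mul a M : dHSProx rho w a M -> M *m a = Prox rho w a.
Proof.
move=> [theta [P [aT yP ->]]]; rewrite -!mulmxA (SGN_Diagv_mul aT) (hatJ_mul_xsol yP).
rewrite ProxE; apply/matrixP => i j; rewrite (ord1 j) Diagv_mulE mxE.
have [a0|a0] := eqVneq (a i 0) 0; last by rewrite (aT i).1.
by rewrite a0 sgr0 mul0r xsol_eq0 ?mulr0 // absvE a0 normr0.
Qed.

Lemma dHS_psd a M : dHSProx rho w a M ->
  M^T = M /\ forall v, 0 <= (v^T *m M *m v) 0 0.
Proof.
move=> [theta [P [_ /hatJ_psd[PT P_psd] ->]]].
split=> [|v]; first by rewrite !trmx_mul Diagv_sym PT mulmxA.
by rewrite -mulmxA -innerE -!mulmxA inner_sym_mx ?Diagv_sym //; apply: P_psd.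
Qed.

Lemma dHS_neq0 a : exists M, dHSProx rho w a M.
Proof.
have [P yP] := hatJ_neq0 (absv a).
by exists (Diagv (sgv a) *m P *m Diagv (sgv a)), (sgv a), P; split=> //; apply: SGN_sgv.
Qed.

Lemma near_SGN a : \forall x \near a, forall theta, SGN x theta -> SGN a theta.
Proof.
have sg_near : \forall x \near a, forall i,
    a i 0 != 0 -> Num.sg ((x : 'cV[R]_t) i 0) = Num.sg (a i 0).
  apply: (near_forall_impl (F := nbhs a)) => i a0.
  have coord_i := @coord_continuous R t 1 i 0 a.
  have [an|ap|a0'] := ltrgtP (a i 0) 0; last by rewrite a0' eqxx in a0.
    by apply: filterS (cvgr_lt _ coord_i _ an) => x xn; rewrite !ltr0_sg.
  by apply: filterS (cvgr_gt _ coord_i _ ap) => x xp; rewrite !gtr0_sg.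
apply: filterS sg_near => x sg_eq theta xT j; split=> [a0|_].
  by rewrite -(sg_eq j a0); apply: (xT j).1; rewrite -sgr_eq0 (sg_eq j a0) sgr_eq0.
have [x0|x0] := eqVneq (x j 0) 0; first exact: (xT j).2.
by rewrite (xT j).1 // -ler_norml normr_sg x0.
Qed.

Lemma near_hatJ a :
  \forall x \near a, forall P, hatJ rho w (absv x) P -> hatJ rho w (absv a) P.
Proof.
have Qi_cont : continuous (fun x => Qi *m absv x).
  by move=> x; apply: continuous_comp; [apply: absv_continuous | apply: mulmx_continuous].
have xsol_cont : continuous (fun x => xsol (absv x)).
  by move=> x; apply: continuous_comp; [apply: absv_continuous | apply: xsol_continuous].
have mult_cont : continuous (fun x => mult rho w (absv x)).
  move=> x; rewrite /mult; apply: cvgB; [exact: nbhs_filter | exact: absv_continuous |].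
  by apply: continuous_comp; [apply: xsol_cont | apply: mulmx_continuous].
have Qi_near : \forall x \near a, forall i,
    (Qi *m absv a) i 0 < 0 -> (Qi *m absv x) i 0 < 0.
  apply: (near_forall_impl (F := nbhs a)) => i.
  exact: cvgr_lt _ (cvg_mx_coord (Qi_cont a)) 0.
have xsol_near : \forall x \near a, forall i,
    xsol (absv a) i 0 != 0 -> xsol (absv x) i 0 != 0.
  apply: (near_forall_impl (F := nbhs a)) => i.
  exact: cvgr_neq0 _ (cvg_mx_coord (xsol_cont a)).
have mult_near : \forall x \near a, forall i,
    mult rho w (absv a) i 0 != 0 -> mult rho w (absv x) i 0 != 0.
  apply: (near_forall_impl (F := nbhs a)) => i.
  exact: cvgr_neq0 _ (cvg_mx_coord (mult_cont a)).
apply: filterS (filterI Qi_near (filterI xsol_near mult_near)).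
move=> x [Qi_x [xsol_x mult_x]] P /hatJP [[Qix0 ->]|[K [suppK KI] ->]]; apply/hatJP.
  by left; split=> // i; rewrite leNgt; apply/negP => /Qi_x; rewrite ltNge Qix0.
right; exists K => //; split.
  apply: fintype.subset_trans suppK; apply/fintype.subsetP => j; rewrite !inE.
  exact: mult_x.
apply: (fintype.subset_trans KI); apply/fintype.subsetP => j; rewrite !inE.
by apply: contraLR => /xsol_x.
Qed.

Lemma dHS_shrink a :
  \forall x \near a, forall M, dHSProx rho w x M -> dHSProx rho w a M.
Proof.
apply: filterS (filterI (near_SGN a) (near_hatJ a)) => x [SGN_x hatJ_x] M.
by move=> [theta [P [xT xP ->]]]; exists theta, P; split; [apply: SGN_x | apply: hatJ_x |].
Qed.

(* [None] stands for the candidate [Q^-1], [Some K] for the reduced inverse [P_K]. *)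
Definition hatJ_cand (oK : option {set 'I_t}) : 'M[R]_t :=
  if oK is Some K then PK rho w K else Qi.

Definition hatJ_adm y (oK : option {set 'I_t}) : Prop :=
  if oK is Some K then Kfam rho w y K else forall i, 0 <= (Qi *m y) i 0.

Lemma hatJ_candP y P : hatJ rho w y P <-> exists2 oK, hatJ_adm y oK & P = hatJ_cand oK.
Proof.
rewrite hatJP; split=> [[[Qiy0 ->]|[K yK ->]]|[[K|] yoK ->]].
- by exists None.
- by exists (Some K).
- by right; exists K.
- by left.
Qed.

Lemma dHS_bigsetU a : [set M | dHSProx rho w a M] =
  \big[setU/set0]_(oK <- enum [set: option {set 'I_t}] | `[< hatJ_adm (absv a) oK >])
    (diag_congr (hatJ_cand oK) @` sign_box a).
Proof.
rewrite -bigcup_seq_cond; apply/seteqP; split=> M.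
  move=> [theta [P [aT /hatJ_candP [oK ao ->] ->]]]; exists oK.
    by rewrite /= mem_enum in_setT; apply/asboolP.
  by exists theta^T; [apply/SGN_sign_box | rewrite /diag_congr /Diagv].
move=> [oK /andP[_ /asboolP ao] [r box <-]]; exists r^T, (hatJ_cand oK).
split; first by apply/SGN_sign_box; rewrite trmxK.
  by apply/hatJ_candP; exists oK.
by rewrite /Diagv trmxK.
Qed.

Lemma dHS_compact a : compact [set M | dHSProx rho w a M].
Proof.
rewrite dHS_bigsetU; apply: bigsetU_compact => oK _.
apply: continuous_compact; last exact: sign_box_compact.
exact/continuous_subspaceT/diag_congr_continuous.
Qed.

End ProxJacobian.

Theorem proposition3p4 (R : realType) (t : nat) (w : 'cV[R]_t) (rho : R) :
  (1 <= t)%N -> (forall i, 0 < w i 0) -> 0 < rho ->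
  [/\ (forall a : 'cV[R]_t, exists M, dHSProx rho w a M),
      (forall a : 'cV[R]_t, compact [set M | dHSProx rho w a M]),
      upper_semicontinuous_mf (dHSProx rho w),
      (forall (a : 'cV[R]_t) M, dHSProx rho w a M ->
         M^T = M /\ forall v : 'cV[R]_t, 0 <= (v^T *m M *m v) 0 0) &
      strongly_semismooth (Prox rho w) (dHSProx rho w)].
Proof.
move=> _ w_gt0 rho_gt0; have rho_ge0 := ltW rho_gt0.
have w_ge0 i : 0 <= w i 0 by apply: ltW.
have J_shrink := dHS_shrink rho_ge0 w_ge0.
split.
- exact: dHS_neq0.
- exact: dHS_compact.
- exact: shrinking_usc.
- exact: dHS_psd.
split=> [a|]; first by exists (Num.sqrt t%:R + 1), 1 => // x y _ _; apply: Prox_lipschitz.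
exact: shrinking_strongly_semismooth_at (dHS_neq0 rho_ge0 w_ge0) J_shrink
  (dHS_mul rho_ge0 w_ge0).
Qed.
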